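(* Let $X\subseteq\mathbb{R}^k$ be a set of feasible alternatives, $\mathbf{f}=(f_1,f_2):X\to\mathbb{R}^2$ a vector criterion and $Y=\mathbf{f}(X)$. Consider three decision makers $DM_1,DM_2,DM_3$ whose preference relations $\succ_1,\succ_2,\succ_3$ on $\mathbb{R}^2$ are cone relations with cones $K_1,K_2,K_3$, each $K_l$ being a convex pointed cone with $\mathbb{R}^2_+\subseteq K_l$ and $\mathbf{0}_2\notin K_l$. Suppose that vectors $$\mathbf{y}^{(l)}=\begin{pmatrix} w_1^{(l)}\\ -w_2^{(l)}\end{pmatrix},\qquad w_1^{(l)}>0,\ w_2^{(l)}>0,\qquad l=1,2,3,$$ are given with $\mathbf{y}^{(1)}\succ_1\mathbf{0}_2$, $\mathbf{y}^{(2)}\succ_2\mathbf{0}_2$, $\mathbf{y}^{(3)}\succ_3\mathbf{0}_2$, and that no two of these vectors are codirectional. Put $W(l,s)=w_1^{(l)}w_2^{(s)}-w_2^{(l)}w_1^{(s)}$. Then there is exactly one index $s\in\{1,2,3\}$ such that $W(l,s)>0$ and $W(s,k)>0$ for some indices $l,k\in\{1,2,3\}$ with $l\neq k$, $l\neq s$, $k\neq s$; and for this $s$, defining the vector criterion $\mathbf{g}=(g_1,g_2)$ on $X$ by $g_1=f_1$, $g_2=w_2^{(s)}f_1+w_1^{(s)}f_2$, we have $\hat P_{\mathbf{g}}(Y)\subseteq P(Y)$, where $\hat P_{\mathbf{g}}(Y)=\mathbf{f}(P_{\mathbf{g}}(X))$.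
   Context: For $\mathbf{a},\mathbf{b}\in\mathbb{R}^m$, $\mathbf{a}\geq\mathbf{b}$ means $a_i\ge b_i$ for all $i$ and $\mathbf{a}\neq\mathbf{b}$ (Pareto relation); $\mathbb{R}^m_+=\{\mathbf{y}\in\mathbb{R}^m:\mathbf{y}\geq\mathbf{0}_m\}$ (nonnegative orthant without the origin). A binary relation $\mathfrak{R}$ on $\mathbb{R}^m$ is a cone relation with cone $K$ if $\mathbf{y}^{(1)}\mathfrak{R}\,\mathbf{y}^{(2)}\iff \mathbf{y}^{(1)}-\mathbf{y}^{(2)}\in K$ for all $\mathbf{y}^{(1)},\mathbf{y}^{(2)}\in\mathbb{R}^m$. The Pareto set is $P(Y)=\{\mathbf{y}^*\in Y:\ \nexists\,\mathbf{y}\in Y,\ \mathbf{y}\geq\mathbf{y}^*\}$, and for a vector criterion $\mathbf{g}$ on $X$, $P_{\mathbf{g}}(X)=\{\mathbf{x}^*\in X:\ \nexists\,\mathbf{x}\in X,\ \mathbf{g}(\mathbf{x})\geq\mathbf{g}(\mathbf{x}^* )\}$. Two vectors are codirectional if one is a positive multiple of the other. *)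

From HB Require Import structures.
From mathcomp Require Import all_boot all_order all_algebra.
From mathcomp Require Import boolp classical_sets reals.
Set Implicit Arguments. Unset Strict Implicit. Unset Printing Implicit Defensive.
Import Order.TTheory GRing.Theory Num.Theory.
Local Open Scope ring_scope.
Local Open Scope classical_set_scope.

Section Defs.
Variable R : realType.

Definition pareto_ge (m : nat) (a b : 'rV[R]_m) : Prop :=
  (forall i : 'I_m, b ord0 i <= a ord0 i) /\ a <> b.

Definition orthant_plus (m : nat) : set 'rV[R]_m :=
  [set y | pareto_ge y 0].

Definition is_cone_relation (m : nat) (rel : 'rV[R]_m -> 'rV[R]_m -> Prop)
  (K : set 'rV[R]_m) : Prop :=
  forall y1 y2, rel y1 y2 <-> K (y1 - y2).

Definition is_cone (m : nat) (K : set 'rV[R]_m) : Prop :=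
  forall (a : R) y, 0 < a -> K y -> K (a *: y).

Definition is_convex_cone (m : nat) (K : set 'rV[R]_m) : Prop :=
  is_cone K /\ forall y1 y2, K y1 -> K y2 -> K (y1 + y2).

Definition is_pointed (m : nat) (K : set 'rV[R]_m) : Prop :=
  forall y, y != 0 -> K y -> ~ K (- y).

Definition pareto_set (m : nat) (Y : set 'rV[R]_m) : set 'rV[R]_m :=
  [set ys | Y ys /\ ~ (exists y, Y y /\ pareto_ge y ys)].

Definition pareto_set_g (k m : nat) (g : 'rV[R]_k -> 'rV[R]_m)
  (X : set 'rV[R]_k) : set 'rV[R]_k :=
  [set xs | X xs /\ ~ (exists x, X x /\ pareto_ge (g x) (g xs))].

Definition codirectional (m : nat) (a b : 'rV[R]_m) : Prop :=
  exists c : R, 0 < c /\ a = c *: b.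

Definition vec2 (a b : R) : 'rV[R]_2 :=
  \row_(i < 2) (if i == ord0 then a else b).

Definition comp1 (y : 'rV[R]_2) : R := y ord0 ord0.
Definition comp2 (y : 'rV[R]_2) : R := y ord0 ord_max.

End Defs.

From HB Require Import structures.
From mathcomp Require Import all_boot all_order all_algebra.
From mathcomp Require Import boolp classical_sets reals.
From mathcomp Require Import zify.
Set Implicit Arguments. Unset Strict Implicit. Unset Printing Implicit Defensive.
Import Order.TTheory GRing.Theory Num.Theory.
Local Open Scope ring_scope.
Local Open Scope classical_set_scope.

(* W(l,s) > 0 says exactly that the slope w2/w1 of y^(l) is smaller than that
   of y^(s), and non-codirectionality makes the three slopes distinct; so the
   index s is the one carrying the median slope, and it is unique because the
   median of three distinct values is neither their minimum nor their maximum.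
   The inclusion holds for any positive weights: g is f followed by an
   injective, componentwise monotone linear map of R^2, which preserves Pareto
   dominance. *)

Section Median.
Variables (disp : Order.disp_t) (T : orderType disp) (r : 'I_3 -> T).
Hypothesis r_inj : injective r.

Definition is_median (s : 'I_3) : Prop :=
  exists l k : 'I_3, [/\ l != k, l != s, k != s, (r l < r s)%O & (r s < r k)%O].

Let rmin := [arg min_(i < ord0) r i]%O.
Let rmax := [arg max_(i > ord0) r i]%O.

Let rmin_le j : (r rmin <= r j)%O.
Proof. by rewrite /rmin; case: arg_minP => // i _; apply. Qed.

Let le_rmax j : (r j <= r rmax)%O.
Proof. by rewrite /rmax; case: arg_maxP => // i _; apply. Qed.

Let rmin_neq_rmax : rmin != rmax.
Proof.
apply/eqP => min_max.
have r_const j : r j = r rmin.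
  by apply/le_anti; rewrite rmin_le (le_trans (le_rmax j)) // min_max.
by have /r_inj := etrans (r_const ord0) (esym (r_const ord_max)).
Qed.

Let card_inner : #|~: [set rmin; rmax]| = 1%N.
Proof.
by have := cardsC [set rmin; rmax]; rewrite cards2 rmin_neq_rmax card_ord; lia.
Qed.

Let median_inner s : is_median s -> s \in ~: [set rmin; rmax].
Proof.
case=> l [k] [_ _ _ lt_ls lt_sk]; rewrite !inE negb_or.
by apply/andP; split; apply/eqP => e; [move: lt_ls | move: lt_sk];
  rewrite e ltNge ?rmin_le ?le_rmax.
Qed.

Let inner_median s : s \in ~: [set rmin; rmax] -> is_median s.
Proof.
rewrite !inE negb_or => /andP[s_min s_max]; exists rmin, rmax.
by rewrite rmin_neq_rmax ![_ == s]eq_sym s_min s_max !lt_neqAle rmin_le le_rmax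
  !(inj_eq r_inj) eq_sym s_min s_max.
Qed.

Lemma exists_unique_median :
  exists s, is_median s /\ forall s', is_median s' -> s' = s.
Proof.
have /cards1P[s inner_s] : #|~: [set rmin; rmax]| == 1%N by rewrite card_inner.
exists s; split; first by apply: inner_median; rewrite inner_s set11.
by move=> s' /median_inner; rewrite inner_s => /set1P.
Qed.

End Median.

Section ParetoDominance.
Variable R : realType.

Lemma image_pareto_set_g_sub (k m n : nat) (X : set 'rV[R]_k)
    (f : 'rV[R]_k -> 'rV[R]_m) (h : 'rV[R]_m -> 'rV[R]_n) :
  (forall a b, pareto_ge a b -> pareto_ge (h a) (h b)) ->
  f @` pareto_set_g (h \o f) X `<=` pareto_set (f @` X).
Proof.
move=> h_mono _ [x [Xx x_opt] <-]; split; first by exists x.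
move=> [_ [[x' Xx' <-] dom]]; apply: x_opt.
by exists x'; split => //; apply: h_mono.
Qed.

End ParetoDominance.

Section Plane.
Variable R : realType.

Lemma comp1_vec2 (a b : R) : comp1 (vec2 a b) = a.
Proof. by rewrite /comp1 mxE. Qed.

Lemma comp2_vec2 (a b : R) : comp2 (vec2 a b) = b.
Proof. by rewrite /comp2 mxE. Qed.

Lemma vec2_inj (a b a' b' : R) : vec2 a b = vec2 a' b' -> a = a' /\ b = b'.
Proof.
move=> e; split; first by rewrite -(comp1_vec2 a b) e comp1_vec2.
by rewrite -(comp2_vec2 a b) e comp2_vec2.
Qed.

Lemma forall_ord2 (P : 'I_2 -> Prop) : P ord0 -> P ord_max -> forall j, P j.
Proof.
move=> P0 P1 [[|[|//]] j2].
  by rewrite (_ : Ordinal _ = ord0) //; apply: val_inj.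
by rewrite (_ : Ordinal _ = ord_max) //; apply: val_inj.
Qed.

Lemma row2_eq (y z : 'rV[R]_2) : comp1 y = comp1 z -> comp2 y = comp2 z -> y = z.
Proof. by move=> e1 e2; apply/rowP; apply: forall_ord2. Qed.

Lemma pareto_ge2E (a b : 'rV[R]_2) :
  pareto_ge a b <-> [/\ comp1 b <= comp1 a, comp2 b <= comp2 a & a <> b].
Proof.
split=> [[le_ba ne_ab] | [le1 le2 ne_ab]]; first by split; rewrite ?le_ba.
by split=> //; apply: forall_ord2.
Qed.

Definition lower_tri2 (c d : R) (y : 'rV[R]_2) : 'rV[R]_2 :=
  vec2 (comp1 y) (c * comp1 y + d * comp2 y).

Lemma pareto_ge_lower_tri2 (c d : R) (a b : 'rV[R]_2) : 0 <= c -> 0 < d ->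
  pareto_ge a b -> pareto_ge (lower_tri2 c d a) (lower_tri2 c d b).
Proof.
move=> c_ge0 d_gt0 /pareto_ge2E[le1 le2 ne_ab]; apply/pareto_ge2E.
rewrite /lower_tri2 !comp1_vec2 !comp2_vec2; split => //.
  by apply: lerD; apply: ler_wpM2l => //; apply: ltW.
move=> /vec2_inj[e1]; rewrite e1 => /addrI /(mulfI (lt0r_neq0 d_gt0)) e2.
exact/ne_ab/row2_eq.
Qed.

Lemma cross_gt0E (a b c d : R) : 0 < a -> 0 < c ->
  (0 < a * d - b * c) = (b / a < d / c).
Proof.
move=> a_gt0 c_gt0.
by rewrite subr_gt0 ltr_pdivrMr // mulrAC ltr_pdivlMr // [d * a]mulrC.
Qed.

Lemma scale_vec2 (x a b : R) : x *: vec2 a b = vec2 (x * a) (x * b).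
Proof. by apply/rowP => j; rewrite !mxE; case: ifP. Qed.

Lemma codirectional_vec2 (a b c d : R) : 0 < a -> 0 < c -> b / a = d / c ->
  codirectional (vec2 a b) (vec2 c d).
Proof.
move=> a_gt0 c_gt0 same_slope; exists (a / c); split; first by rewrite divr_gt0.
rewrite scale_vec2 divfK ?lt0r_neq0 //; congr vec2.
by rewrite mulrAC -mulrA -same_slope mulrC divfK // lt0r_neq0.
Qed.

End Plane.

Theorem theorem1 (R : realType) (k : nat) (X : set 'rV[R]_k)
  (f : 'rV[R]_k -> 'rV[R]_2)
  (pref : 'I_3 -> 'rV[R]_2 -> 'rV[R]_2 -> Prop) (K : 'I_3 -> set 'rV[R]_2)
  (w1 w2 : 'I_3 -> R) :
  (forall l, is_cone_relation (pref l) (K l)) ->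
  (forall l, is_convex_cone (K l)) ->
  (forall l, is_pointed (K l)) ->
  (forall l, @orthant_plus R 2 `<=` K l) ->
  (forall l, ~ K l 0) ->
  (forall l, 0 < w1 l) -> (forall l, 0 < w2 l) ->
  (forall l, pref l (vec2 (w1 l) (- w2 l)) 0) ->
  (forall l s, l != s -> ~ codirectional (vec2 (w1 l) (- w2 l)) (vec2 (w1 s) (- w2 s))) ->
  let W := fun l s : 'I_3 => w1 l * w2 s - w2 l * w1 s in
  let good := fun s : 'I_3 =>
    exists l kk : 'I_3, [/\ l != kk, l != s, kk != s, 0 < W l s & 0 < W s kk] in
  exists s : 'I_3,
    [/\ good s,
        (forall s' : 'I_3, good s' -> s' = s) &
        let g := fun x : 'rV[R]_k =>
          vec2 (comp1 (f x)) (w2 s * comp1 (f x) + w1 s * comp2 (f x)) in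
        f @` pareto_set_g g X `<=` pareto_set (f @` X)].
Proof.
move=> _ _ _ _ _ w1_gt0 w2_gt0 _ not_codir W good.
pose slope i := w2 i / w1 i.
have W_gt0E l s : (0 < W l s) = (slope l < slope s) by apply: cross_gt0E.
have slope_inj : injective slope.
  move=> l s same_slope; have [//|l_neq_s] := eqVneq l s.
  exfalso; apply: (not_codir l s l_neq_s); apply: codirectional_vec2 => //.
  by rewrite !mulNr; congr (- _).
have goodE s : good s <-> is_median slope s.
  by split=> -[l [kk]]; rewrite ?W_gt0E => ?; exists l, kk; rewrite ?W_gt0E.
have [s [median_s median_uniq]] := exists_unique_median slope_inj.
exists s; split; first by apply/goodE.
  by move=> s' /goodE /median_uniq.
apply: (image_pareto_set_g_sub (h := lower_tri2 (w2 s) (w1 s))) => a b.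
exact: pareto_ge_lower_tri2 (ltW (w2_gt0 s)) (w1_gt0 s).
Qed.
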